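(* Let $\mathcal X$ be an instance space, $A,B$ two disjoint groups with $\Pr[x\in B]=r\in(0,1)$, $\mathcal D_A,\mathcal D_B$ distributions on $\mathcal X$, and $h_A^*,h_B^*:\mathcal X\to\{0,1\}$ with $p:=\Pr_{\mathcal D_A}[h_A^*(x)=1]=\Pr_{\mathcal D_B}[h_B^*(x)=1]\in(0,1]$. Let $\eta\in[0,1/2)$, $\beta_{POS},\beta_{NEG}\in(0,1]$, $\nu\in[0,1)$. Then $h^*=(h_A^*,h_B^* )$ satisfies Equal Opportunity on the biased data distribution described in the context.
   Context: True distribution: group $B$ with probability $r$ (then $x\sim\mathcal D_B$), else group $A$ ($x\sim\mathcal D_A$); for $x$ of group $g$ the true label is $y=1-h_g^*(x)$ with probability $\eta$ and $y=h_g^*(x)$ otherwise, independently. Biased distribution: each true example with $x\in B,y=1$ is kept with probability $\beta_{POS}$, each with $x\in B,y=0$ is kept with probability $\beta_{NEG}$, group-$A$ examples are always kept; then each kept example with $x\in B$ and $y=1$ has its label flipped to $0$ independently with probability $\nu$; the biased distribution is the distribution of kept examples with observed labels. A pair $h=(h_A,h_B)$ satisfies Equal Opportunity on a distribution if $\Pr[h_A(x)=1\mid y=1,x\in A]=\Pr[h_B(x)=1\mid y=1,x\in B]$ under that distribution. *)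

From HB Require Import structures.
From mathcomp Require Import all_boot all_order all_algebra.
From mathcomp Require Import all_classical all_reals all_analysis.
Set Implicit Arguments. Unset Strict Implicit. Unset Printing Implicit Defensive.
Import Order.TTheory GRing.Theory Num.Theory.
Local Open Scope classical_set_scope.
Local Open Scope ring_scope.

(* Outcomes are triples (g, x, y): g = true means group B, g = false group A;
   x the instance; y the (observed) label. *)

Section Fairness.
Variables (R : realType) (d : measure_display) (X : measurableType d).

Definition outcome := (bool * X * bool)%type.

(* Pr[true label = y | x], given the ground-truth label hx = h_g^*(x). *)
Definition noiseP (eta : R) (hx y : bool) : R :=
  if y == hx then 1 - eta else eta.

(* probability that an example of group B with true label y is kept *)
Definition keepP (bPos bNeg : R) (y : bool) : R := if y then bPos else bNeg.

(* Pr[observed label = yo | true label y] for group B *)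
Definition obsP (nu : R) (y yo : bool) : R :=
  if y then (if yo then 1 - nu else nu) else (if yo then 0 else 1).

Definition biasedMass (r eta bPos bNeg nu : R)
  (DA DB : probability X R) (hA hB : X -> bool) (S : set outcome) : R :=
  r * Rintegral DB setT (fun x =>
        \sum_(y : bool) noiseP eta (hB x) y * keepP bPos bNeg y *
          \sum_(yo : bool) obsP nu y yo * \1_S (true, x, yo))
  + (1 - r) * Rintegral DA setT (fun x =>
        \sum_(y : bool) noiseP eta (hA x) y * \1_S (false, x, y)).

(* The biased distribution: distribution of kept examples with observed
   labels (the sampling mass conditioned on being kept). *)
Definition biasedDist (r eta bPos bNeg nu : R)
  (DA DB : probability X R) (hA hB : X -> bool) (S : set outcome) : R :=
  biasedMass r eta bPos bNeg nu DA DB hA hB S /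
  biasedMass r eta bPos bNeg nu DA DB hA hB setT.

Definition condProb (P : set outcome -> R) (E C : set outcome) : R :=
  P (E `&` C) / P C.

Definition equalOpportunity (P : set outcome -> R) (hA hB : X -> bool) : Prop :=
  condProb P [set t : outcome | hA t.1.2] [set t : outcome | t.2 /\ t.1.1 = false] =
  condProb P [set t : outcome | hB t.1.2] [set t : outcome | t.2 /\ t.1.1 = true].

End Fairness.

(** Conditioning on "observed label 1", group A is untouched by the bias,
    while in group B an example is counted only if its true label is 1, it
    is kept (probability [bPos]) and its label is not flipped (probability
    [1 - nu]).  So both the event and its intersection with "[h_B^*]
    predicts 1" get their mass scaled by the same factor [bPos (1 - nu)],
    and the normalisation, the group weights [r], [1 - r] and this factor
    cancel: in each group the true-positive rate of [h^*] is
    [(1 - eta) p / ((1 - 2 eta) p + eta)], a function of the shared base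
    rate [p] alone. *)

From HB Require Import structures.
From mathcomp Require Import all_boot all_order all_algebra.
From mathcomp Require Import all_classical all_reals all_analysis.
From mathcomp Require Import ring.
Import Order.TTheory GRing.Theory Num.Theory.
Local Open Scope classical_set_scope.
Local Open Scope ring_scope.

Lemma divMKl (F : fieldType) (c a b : F) : c != 0 -> (c * a) / (c * b) = a / b.
Proof. by move=> c0; rewrite invfM mulrACA divff // mul1r. Qed.

Lemma Rintegral_bool_affine (R : realType) (d : measure_display)
    (X : measurableType d) (P : probability X R) (h : X -> bool) (a b : R) :
  measurable [set x | h x] ->
  Rintegral P setT (fun x => a * (h x)%:R + b) = a * fine (P [set x | h x]) + b.
Proof.
move=> mh.
have indic_h x : a * (h x)%:R + b = a * \1_[set x | h x] x + b.
  rewrite indicE.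
  by case hx: (h x); [rewrite mem_set | rewrite memNset //= hx].
rewrite (eq_Rintegral _ (fun x _ => indic_h x)) RintegralD //; first last.
- exact: finite_measure_integrable_cst.
- have := integrableZl measurableT a (integrable_indic P mh).
  by apply: eq_integrable.
rewrite RintegralZl ?integrable_indic // Rintegral_cst //.
rewrite [fine (P setT)](_ : _ = 1) ?mulr1; last by rewrite probability_setT.
by rewrite /Rintegral integral_indic // setIT.
Qed.

Lemma in_set_bool (T : Type) (P : T -> bool) (t : T) :
  (t \in [set t | P t]) = P t.
Proof. by apply/idP/idP => [/set_mem | /mem_set]. Qed.

Lemma in_set_pos_group (T : Type) (g0 : bool) (t : bool * T * bool) :
  (t \in [set t : bool * T * bool | t.2 /\ t.1.1 = g0]) = t.2 && (t.1.1 == g0).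
Proof.
by apply/idP/andP => [/set_mem [-> ->] | [y1 /eqP g1]]; last exact/mem_set.
Qed.

Lemma in_set_pred_pos_group (T : Type) (h : T -> bool) (g0 : bool)
    (t : bool * T * bool) :
  (t \in [set t : bool * T * bool | h t.1.2] `&`
    [set t : bool * T * bool | t.2 /\ t.1.1 = g0]) =
  [&& h t.1.2, t.2 & t.1.1 == g0].
Proof. by rewrite in_setI in_set_bool in_set_pos_group. Qed.

Section BiasedMass.
Variables (R : realType) (d : measure_display) (X : measurableType d).
Variables (DA DB : probability X R) (hA hB : X -> bool).
Variables (r eta bPos bNeg nu : R).
Hypotheses (mA : measurable [set x | hA x]) (mB : measurable [set x | hB x]).

Let pA := fine (DA [set x | hA x]).
Let pB := fine (DB [set x | hB x]).
Let mass := biasedMass r eta bPos bNeg nu DA DB hA hB.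

Lemma biasedMass_affine (S : set (outcome X)) (aA bA aB bB : R) :
  (forall x, \sum_(y : bool) noiseP eta (hB x) y * keepP bPos bNeg y *
       \sum_(yo : bool) obsP nu y yo * \1_S (true, x, yo) =
     aB * (hB x)%:R + bB) ->
  (forall x, \sum_(y : bool) noiseP eta (hA x) y * \1_S (false, x, y) =
     aA * (hA x)%:R + bA) ->
  mass S = r * (aB * pB + bB) + (1 - r) * (aA * pA + bA).
Proof.
move=> eqB eqA; rewrite /mass /biasedMass -!Rintegral_bool_affine //.
by congr (_ * _ + _ * _); apply: eq_Rintegral => x _.
Qed.

Lemma biasedMass_posA :
  mass [set t : outcome X | t.2 /\ t.1.1 = false] =
  (1 - r) * ((1 - eta - eta) * pA + eta).
Proof.
rewrite (@biasedMass_affine _ (1 - eta - eta) eta 0 0) => [|x|x].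
- by rewrite mul0r addr0 mulr0 add0r.
- by rewrite !big_bool !indicE !in_set_pos_group /=; ring.
- rewrite big_bool !indicE !in_set_pos_group /= /noiseP.
  by case: (hA x) => /=; ring.
Qed.

Lemma biasedMass_truePosA :
  mass ([set t : outcome X | hA t.1.2] `&`
        [set t : outcome X | t.2 /\ t.1.1 = false]) =
  (1 - r) * ((1 - eta) * pA).
Proof.
rewrite (@biasedMass_affine _ (1 - eta) 0 0 0) => [|x|x].
- by rewrite mul0r !addr0 mulr0 add0r.
- by rewrite !big_bool !indicE !in_set_pred_pos_group /= !andbF /=; ring.
- rewrite big_bool !indicE !in_set_pred_pos_group /= /noiseP.
  by case: (hA x) => /=; ring.
Qed.

Lemma biasedMass_posB :
  mass [set t : outcome X | t.2 /\ t.1.1 = true] =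
  r * (bPos * (1 - nu)) * ((1 - eta - eta) * pB + eta).
Proof.
rewrite (@biasedMass_affine _ 0 0 ((1 - eta - eta) * bPos * (1 - nu))
  (eta * bPos * (1 - nu))) => [|x|x].
- by rewrite mul0r !addr0 mulr0 addr0; ring.
- rewrite !big_bool !indicE !in_set_pos_group /= /noiseP /keepP /obsP.
  by case: (hB x) => /=; ring.
- by rewrite big_bool !indicE !in_set_pos_group /=; ring.
Qed.

Lemma biasedMass_truePosB :
  mass ([set t : outcome X | hB t.1.2] `&`
        [set t : outcome X | t.2 /\ t.1.1 = true]) =
  r * (bPos * (1 - nu)) * ((1 - eta) * pB).
Proof.
rewrite (@biasedMass_affine _ 0 0 ((1 - eta) * bPos * (1 - nu)) 0) => [|x|x].
- by rewrite mul0r !addr0 mulr0 addr0; ring.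
- rewrite !big_bool !indicE !in_set_pred_pos_group /=.
  by rewrite /noiseP /keepP /obsP; case: (hB x) => /=; ring.
- by rewrite big_bool !indicE !in_set_pred_pos_group /= !andbF /=; ring.
Qed.

End BiasedMass.

Lemma equalOpportunity_divr (R : realType) (d : measure_display)
    (X : measurableType d) (P : set (outcome X) -> R) (z : R)
    (hA hB : X -> bool) :
  equalOpportunity P hA hB -> equalOpportunity (fun S => P S / z) hA hB.
Proof.
rewrite /equalOpportunity /condProb /= => eqP.
have [->|z0] := eqVneq z 0; first by rewrite invr0 !mulr0 mul0r.
by rewrite !invf_div !mulrA !divfK // eqP.
Qed.

Theorem mainTheorem3 (R : realType) (d : measure_display) (X : measurableType d)
  (DA DB : probability X R) (hA hB : X -> bool)
  (r p eta bPos bNeg nu : R) :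
  0 < r < 1 ->
  measurable [set x | hA x] -> measurable [set x | hB x] ->
  DA [set x | hA x] = p%:E -> DB [set x | hB x] = p%:E ->
  0 < p <= 1 ->
  0 <= eta < 2^-1 ->
  0 < bPos <= 1 -> 0 < bNeg <= 1 ->
  0 <= nu < 1 ->
  equalOpportunity (biasedDist r eta bPos bNeg nu DA DB hA hB) hA hB.
Proof.
(* The bounds on [p], [eta] and [bNeg] only make the conditioning events
   non-null, which is irrelevant since [x / 0 = 0] on both sides. *)
move=> /andP[r0 r1] mA mB DA_p DB_p _ _ /andP[bPos0 _] _ /andP[_ nu1].
apply: equalOpportunity_divr.
rewrite /equalOpportunity /condProb.
rewrite biasedMass_truePosA ?biasedMass_posA //.
rewrite biasedMass_truePosB ?biasedMass_posB //.
rewrite !divMKl ?DA_p ?DB_p //; apply/lt0r_neq0.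
- by rewrite !mulr_gt0 ?subr_gt0.
- by rewrite subr_gt0.
Qed.
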